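(* Let $\mathbb{R}^m$ be endowed with a norm $\|\cdot\|$. Let $\bar A\in\mathbb{R}^{(m+1)\times n}$ have at least two different columns and let $v\in\mathbb{R}^m$. Then for all $\bar u\in F(v)$ and all $x\in\Delta_{n-1}$, \[ \min\{\|x-z\|_1: z\in\Delta_{n-1},\ \bar Az=\bar u\}\le\frac{2\|\bar Ax-\bar u\|_v}{\Phi_v(\bar A)}. \]
   Context: $\Delta_{n-1}=\{x\in\mathbb{R}^n_+:\sum_ix_i=1\}$. A matrix is identified with the set of its columns; $\mathrm{conv}(\bar A)=\{\bar Ax:x\in\Delta_{n-1}\}$. For $\bar w=(w,w_{m+1})\in\mathbb{R}^{m+1}$, $\|\bar w\|_v=\sqrt{\|w\|^2+|\langle v,w\rangle+w_{m+1}|}$; for nonempty $F,G\subseteq\mathbb{R}^{m+1}$, $\mathrm{dist}_v(F,G)=\min_{\bar w\in F,\bar w'\in G}\|\bar w-\bar w'\|_v$. $F(v)=\operatorname{Argmin}_{\bar w\in\mathrm{conv}(\bar A)}\langle(v,1),\bar w\rangle$, a face of $\mathrm{conv}(\bar A)$. The local facial distance is $\Phi_v(\bar A)=\min\{\mathrm{dist}_v(G,\mathrm{conv}(\bar A\setminus G)):G\text{ a face of }F(v),\ \emptyset\ne G\ne\mathrm{conv}(\bar A)\}$, where $\bar A\setminus G$ denotes the columns of $\bar A$ not in $G$. *)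

From mathcomp Require Import all_boot all_order all_algebra.
From mathcomp Require Import classical_sets reals.
Set Implicit Arguments. Unset Strict Implicit. Unset Printing Implicit Defensive.
Import Order.TTheory GRing.Theory Num.Theory.
Local Open Scope ring_scope.
Local Open Scope classical_set_scope.

Section Defs.
Variable R : realType.

Definition is_norm (m : nat) (N : 'cV[R]_m -> R) : Prop :=
  [/\ forall x, N x = 0 -> x = 0,
      forall (a : R) x, N (a *: x) = `|a| * N x &
      forall x y, N (x + y) <= N x + N y].

Definition simplex (n : nat) : set 'cV[R]_n :=
  [set x | (forall i, 0 <= x i 0) /\ \sum_i x i 0 = 1].

Definition convA (p n : nat) (A : 'M[R]_(p, n)) : set 'cV[R]_p :=
  [set A *m x | x in @simplex n].

Definition conv_cols (p n : nat) (A : 'M[R]_(p, n)) (P : 'I_n -> Prop)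
  : set 'cV[R]_p :=
  [set A *m x | x in [set x | @simplex n x /\ forall j, ~ P j -> x j 0 = 0]].

(* <(v,1), wbar> = <v,w> + w_{m+1}, with wbar = col_mx w w_{m+1} *)
Definition lin (m : nat) (v : 'cV[R]_m) (w : 'cV[R]_(m + 1)) : R :=
  (v^T *m usubmx w) 0 0 + (dsubmx w) 0 0.

Definition normv (m : nat) (N : 'cV[R]_m -> R) (v : 'cV[R]_m)
  (w : 'cV[R]_(m + 1)) : R :=
  Num.sqrt (N (usubmx w) ^+ 2 + `|lin v w|).

(* dist_v(F,G) = min over F x G of ||w - w'||_v (stated as an infimum;
   for the nonempty compact sets used below it is attained) *)
Definition distv (m : nat) (N : 'cV[R]_m -> R) (v : 'cV[R]_m)
  (F G : set 'cV[R]_(m + 1)) : R :=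
  inf [set d | exists (w w' : 'cV[R]_(m + 1)),
          [/\ F w, G w' & d = normv N v (w - w')]].

Definition convex_set (p : nat) (C : set 'cV[R]_p) : Prop :=
  forall x y (l : R), C x -> C y -> 0 <= l <= 1 -> C (l *: x + (1 - l) *: y).

Definition is_face (p : nat) (C G : set 'cV[R]_p) : Prop :=
  [/\ G `<=` C, convex_set G &
      forall x y (l : R), C x -> C y -> 0 < l < 1 ->
        G (l *: x + (1 - l) *: y) -> G x /\ G y].

Definition Fv (m n : nat) (A : 'M[R]_(m + 1, n)) (v : 'cV[R]_m)
  : set 'cV[R]_(m + 1) :=
  [set w | convA A w /\ forall w', convA A w' -> lin v w <= lin v w'].

(* local facial distance Phi_v(Abar) (min over the finitely many faces,
   stated as an infimum) *)
Definition Phi (m n : nat) (N : 'cV[R]_m -> R) (A : 'M[R]_(m + 1, n))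
  (v : 'cV[R]_m) : R :=
  inf [set distv N v G (conv_cols A (fun j => ~ G (col j A))) |
        G in [set G | is_face (Fv A v) G /\ G <> set0 /\ G <> convA A]].

Definition l1norm (n : nat) (x : 'cV[R]_n) : R := \sum_i `|x i 0|.

End Defs.
Arguments simplex {R} n.

From mathcomp Require Import all_boot all_order all_algebra.
From mathcomp Require Import classical_sets reals.
From mathcomp Require Import boolp topology normedtype derive realfun matrix_normedtype.
From mathcomp Require Import ring lra.
Set Implicit Arguments. Unset Strict Implicit. Unset Printing Implicit Defensive.
Import Order.TTheory GRing.Theory Num.Theory.
Import numFieldTopology.Exports numFieldNormedType.Exports.
Local Open Scope ring_scope.
Local Open Scope classical_set_scope.

(* Let z be a point of the fibre {z in the simplex | A z = u} nearest to x in the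
   l1 norm, which exists by compactness, and split x - z into its positive part (the
   excess) and its negative part (the deficit): both have the same mass t, and
   ||x - z||_1 = 2 t.  When t > 0, q = A (deficit / t) lies in F(v), since the deficit
   is supported where z is, and p = A (excess / t) satisfies A x - u = t (p - q).  Let G
   be the smallest face of F(v) containing q.  If the excess charged a column of G, part
   of the deficit could be moved onto that column without changing A z, bringing z
   strictly closer to x.  Hence p lies in the hull of the columns outside G, and
   t Phi_v <= t ||q - p||_v <= ||A x - u||_v.  Finally Phi_v > 0: a face enters Phi_v
   only through its set of columns, and for each of the finitely many sets of columns
   the two hulls are disjoint compact sets, hence at positive distance. *)

Section Topology.
Variable R : realType.

Lemma continuous_sumr (T : topologicalType) (I : finType) (F : I -> T -> R) :
  (forall i, continuous (F i)) -> continuous (fun t => \sum_i F i t).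
Proof.
move=> Fc; elim: (index_enum I) => [|i r IHr].
  by under eq_fun do rewrite big_nil; exact: cst_continuous.
under eq_fun do rewrite big_cons.
by move=> t; apply: continuousD; [exact: Fc | exact: IHr].
Qed.

Lemma continuous_normr_comp (T : topologicalType) (f : T -> R) :
  continuous f -> continuous (fun t => `|f t|).
Proof.
move=> fc t; apply: (@continuous_comp _ _ _ f (@Num.Def.normr R R)).
  exact: fc.
exact: norm_continuous.
Qed.

Lemma continuous_at_majorant (T : topologicalType) (f h : T -> R) x :
  {for x, continuous h} -> h x = 0 -> (forall y, `|f x - f y| <= h y) ->
  {for x, continuous f}.
Proof.
move=> hc hx0 fh; apply/cvgrPdist_lt => e e0.
have hxe := (cvgrPdist_lt _ _).1 hc e e0.
near=> y.
have hy : `|h x - h y| < e by near: y; exact: hxe.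
move: hy; rewrite hx0 sub0r normrN; exact: le_lt_trans (le_trans (fh y) (ler_norm _)).
Unshelve. all: by end_near.
Qed.

Lemma compact_pos_lower_bound (T : topologicalType) (K : set T) (f : T -> R) :
  compact K -> {within K, continuous f} -> (forall t, K t -> 0 < f t) ->
  exists2 d, 0 < d & forall t, K t -> d <= f t.
Proof.
move=> Kc fc fK; have [->|/set0P K0] := eqVneq K set0; first by exists 1.
have [t Kt tmin] := compact_EVT_min K0 Kc fc.
rewrite inE in Kt; exists (f t); first exact: fK.
by move=> s Ks; apply: tmin; rewrite inE.
Qed.

Lemma mx_continuous (T : topologicalType) p q (f : T -> 'M[R]_(p, q)) :
  (forall i j, continuous (fun t => f t i j)) -> continuous f.
Proof.
move=> fc t; apply/cvg_mx_entourageP => E entE.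
have : \forall s \near t, forall ij : 'I_p * 'I_q, E (f t ij.1 ij.2, f s ij.1 ij.2).
  apply: filter_forall => -[i j].
  by move: (fc i j t) => /cvg_entourageP; apply.
by apply: filterS => s fsE i j; rewrite inE; exact: (fsE (i, j)).
Qed.

Lemma coord_dist_continuous p q (x : 'M[R]_(p, q)) i j :
  continuous (fun y : 'M[R]_(p, q) => `|(x - y) i j|).
Proof.
apply: continuous_normr_comp => y; under eq_fun do rewrite !mxE.
by apply: continuousB; [exact: cst_continuous | exact: coord_continuous].
Qed.

Lemma mulmx_continuous p q r (B : 'M[R]_(p, q)) :
  continuous (fun z : 'M[R]_(q, r) => B *m z).
Proof.
apply: mx_continuous => i j; under eq_fun do rewrite mxE.
apply: continuous_sumr => k z; apply: continuousM; first exact: cst_continuous.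
exact: coord_continuous.
Qed.

Lemma trmx_continuous p q : continuous (@trmx R p q).
Proof.
by apply: mx_continuous => i j; under eq_fun do rewrite mxE; exact: coord_continuous.
Qed.

Lemma usubmx_continuous m1 m2 q : continuous (@usubmx R m1 m2 q).
Proof.
by apply: mx_continuous => i j; under eq_fun do rewrite mxE; exact: coord_continuous.
Qed.

Lemma cV_box_compact n : compact [set z : 'cV[R]_n | forall i, 0 <= z i 0 <= 1].
Proof.
have := continuous_compact (continuous_subspaceT (@trmx_continuous 1 n))
  (@rV_compact _ _ (fun=> `[0 : R, 1]%classic) (fun=> @segment_compact R 0 1)).
congr compact; apply/seteqP; split => [_ [y y01 <-] i|z z01].
  by rewrite mxE; have := y01 i; rewrite /= in_itv.
by exists z^T; [move=> i; rewrite /= in_itv /= mxE z01 | exact: trmxK].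
Qed.

Lemma inf_ge0 (E : set R) : (forall x, E x -> 0 <= x) -> 0 <= inf E.
Proof.
move=> E0; have [->|En0] := eqVneq E set0; first by rewrite inf0.
by apply: lb_le_inf => //; apply/set0P.
Qed.

End Topology.

Section Norm.
Variables (R : realType) (m : nat) (N : 'cV[R]_m -> R).
Hypothesis Nnorm : is_norm N.

Lemma is_normZ a x : N (a *: x) = `|a| * N x.
Proof. by case: Nnorm. Qed.

Lemma is_norm0 : N 0 = 0.
Proof. by rewrite -(scale0r (0 : 'cV[R]_m)) is_normZ normr0 mul0r. Qed.

Lemma is_normN x : N (- x) = N x.
Proof. by rewrite -scaleN1r is_normZ normrN normr1 mul1r. Qed.

Lemma is_normD x y : N (x + y) <= N x + N y.
Proof. by case: Nnorm. Qed.

Lemma is_norm_eq0 x : N x = 0 -> x = 0.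
Proof. by case: Nnorm => /(_ x). Qed.

Lemma is_norm_distB x y : `|N x - N y| <= N (x - y).
Proof.
rewrite ler_norml; apply/andP; split.
  by have := is_normD (y - x) x; rewrite subrK -[N (y - x)]is_normN opprB; lra.
by have := is_normD (x - y) y; rewrite subrK; lra.
Qed.

Lemma is_norm_le_coord x : N x <= \sum_i N (delta_mx i 0) * `|x i 0|.
Proof.
have {1}-> : x = \sum_i x i 0 *: delta_mx i 0.
  by rewrite {1}[x]matrix_sum_delta; apply: eq_bigr => i _; rewrite big_ord1.
elim/big_ind2: _ => [|a1 a2 b1 b2 h1 h2|i _]; first by rewrite is_norm0.
  exact: le_trans (is_normD _ _) (lerD h1 h2).
by rewrite is_normZ mulrC.
Qed.

Lemma is_norm_continuous : continuous N.
Proof.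
suff Nx (x : 'cV[R]_m) : {for x, continuous N} by move=> x; exact: Nx.
pose h (y : 'cV[R]_m) := \sum_i N (delta_mx i 0 : 'cV[R]_m) * `|(x - y) i 0|.
apply: (continuous_at_majorant (h := h)).
- apply: continuous_sumr => i y.
  apply: (@continuousM R _ (fun=> N (delta_mx i 0)) (fun y : 'cV[R]_m => `|(x - y) i 0|)).
    exact: cst_continuous.
  exact: coord_dist_continuous.
- by apply: big1 => i _; rewrite subrr mxE normr0 mulr0.
- by move=> y; exact: le_trans (is_norm_distB _ _) (is_norm_le_coord _).
Qed.

End Norm.

Section Normv.
Variables (R : realType) (m : nat) (N : 'cV[R]_m -> R) (v : 'cV[R]_m).
Hypothesis Nnorm : is_norm N.

Lemma linE w : lin v w = (row_mx v^T 1%:M *m w) 0 0.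
Proof. by rewrite -[w in RHS]vsubmxK mul_row_col mul1mx mxE. Qed.

Lemma linD w1 w2 : lin v (w1 + w2) = lin v w1 + lin v w2.
Proof. by rewrite !linE mulmxDr mxE. Qed.

Lemma linZ a w : lin v (a *: w) = a * lin v w.
Proof. by rewrite !linE -scalemxAr mxE. Qed.

Lemma linN w : lin v (- w) = - lin v w.
Proof. by rewrite -scaleN1r linZ mulN1r. Qed.

Lemma lin_continuous : continuous (lin v).
Proof.
move=> w; rewrite (funext linE).
apply: (@continuous_comp _ _ _ (mulmx (row_mx v^T 1%:M)) (fun M => M 0 0)).
  exact: mulmx_continuous.
exact: coord_continuous.
Qed.

Lemma normv_ge0 w : 0 <= normv N v w.
Proof. exact: sqrtr_ge0. Qed.

Lemma normvN w : normv N v (- w) = normv N v w.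
Proof. by rewrite /normv linN normrN raddfN is_normN. Qed.

Lemma normv_eq0 w : normv N v w = 0 -> w = 0.
Proof.
move=> /eqP; rewrite sqrtr_eq0 => w_le0.
have u0 : N (usubmx w) = 0.
  apply/eqP; rewrite -sqrf_eq0 eq_le sqr_ge0 andbT.
  by apply: le_trans w_le0; rewrite lerDl.
have d0 : `|lin v w| = 0.
  by apply/eqP; rewrite eq_le normr_ge0 andbT; apply: le_trans w_le0; rewrite lerDr sqr_ge0.
have {}u0 := is_norm_eq0 Nnorm u0.
move/normr0P: d0; rewrite /lin u0 mulmx0 mxE add0r => d0; rewrite -[w]vsubmxK u0.
have -> : dsubmx w = 0 by apply/matrixP => i j; rewrite !ord1 (eqP d0) mxE.
exact: col_mx0.
Qed.

Lemma normv_scale_ge t w : 0 <= t <= 1 -> t * normv N v w <= normv N v (t *: w).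
Proof.
move=> /andP[t0 t1]; rewrite /normv -[t in t * _]ger0_norm // -sqrtr_sqr -sqrtrM ?sqr_ge0 //.
rewrite ler_sqrt ?addr_ge0 ?sqr_ge0 // linZ normrM (ger0_norm t0).
rewrite (_ : usubmx (t *: w) = t *: usubmx w); last exact: linearZ.
rewrite is_normZ // (ger0_norm t0) mulrDr exprMn lerD2l.
by rewrite ler_wpM2r // expr2 ler_piMr.
Qed.

Lemma normv_continuous : continuous (normv N v).
Proof.
have Nu : continuous (fun w : 'cV[R]_(m + 1) => N (usubmx w)).
  by move=> w; apply: continuous_comp; [exact: usubmx_continuous | exact: is_norm_continuous].
have Nu2 : continuous (fun w : 'cV[R]_(m + 1) => N (usubmx w) ^+ 2).
  by under eq_fun do rewrite expr2; move=> w; exact: (@continuousM R _ _ _ _ (Nu w) (Nu w)).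
move=> w; apply: (@continuous_comp _ _ _ (fun w => N (usubmx w) ^+ 2 + `|lin v w|) Num.sqrt).
  by apply: (@continuousD R R^o _ _ _ _ (Nu2 w)); exact: continuous_normr_comp lin_continuous w.
exact: sqrt_continuous.
Qed.

End Normv.

Section Simplex.
Variables (R : realType) (n : nat).
Implicit Types z : 'cV[R]_n.

Lemma simplex_delta j : simplex n (delta_mx j 0 : 'cV[R]_n).
Proof.
split=> [i|]; first by rewrite mxE ler0n.
by rewrite (bigD1 j) //= mxE !eqxx big1 ?addr0 // => i /negbTE ij; rewrite mxE ij.
Qed.

Lemma simplex_le1 z j : simplex n z -> z j 0 <= 1.
Proof. by move=> [z0 <-]; rewrite (bigD1 j) //= lerDl sumr_ge0. Qed.

Lemma simplex_neq0 z : simplex n z -> exists j, z j 0 != 0.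
Proof.
move=> [_ z1]; have [/existsP //|/existsPn z0] := boolP [exists j, z j 0 != 0].
by move: z1; rewrite big1 => [/eqP|j _]; [rewrite eq_sym oner_eq0 | exact/eqP/negbNE/z0].
Qed.

Lemma simplex_normalize (w : 'cV[R]_n) :
  (forall i, 0 <= w i 0) -> 0 < \sum_i w i 0 -> simplex n ((\sum_i w i 0)^-1 *: w).
Proof.
move=> w0 wpos; split=> [i|]; first by rewrite mxE mulr_ge0 ?invr_ge0 ?(ltW wpos).
by under eq_bigr do rewrite mxE; rewrite -mulr_sumr mulVf ?gt_eqF.
Qed.

Lemma simplex_split z j : simplex n z -> z j 0 != 0 ->
  z = delta_mx j 0 \/ exists z', [/\ simplex n z', 0 < z j 0 < 1,
    z = z j 0 *: delta_mx j 0 + (1 - z j 0) *: z' &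
    forall k, z' k 0 != 0 -> z k 0 != 0 /\ k != j].
Proof.
move=> zs zj; have [z0 z1] := zs.
have zj_gt0 : 0 < z j 0 by rewrite lt_neqAle eq_sym zj z0.
have [zj1|zj_neq1] := eqVneq (z j 0) 1.
  left; apply/matrixP => k i; rewrite ord1 mxE eqxx andbT.
  have [->|kj] := eqVneq k j; first by rewrite zj1.
  suff : \sum_(k0 | k0 != j) z k0 0 = 0 by move/psumr_eq0P; apply.
  by move: z1; rewrite (bigD1 j) //= zj1; lra.
have zj_lt1 : z j 0 < 1 by rewrite lt_neqAle zj_neq1 simplex_le1.
have sum_rest : \sum_i (z - z j 0 *: delta_mx j 0) i 0 = 1 - z j 0.
  under eq_bigr do rewrite !mxE; rewrite sumrB z1 -mulr_sumr (bigD1 j) //= eqxx.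
  by rewrite big1 ?addr0 ?mulr1 // => i /negbTE ->.
right; exists ((1 - z j 0)^-1 *: (z - z j 0 *: delta_mx j 0)); split.
- rewrite -sum_rest; apply: simplex_normalize => [i|]; last by rewrite sum_rest subr_gt0.
  rewrite !mxE; have [->|_] := eqVneq i j; first by rewrite mulr1 subrr.
  by rewrite mulr0 subr0.
- by rewrite zj_gt0 zj_lt1.
- by rewrite scalerA divff ?subr_eq0 1?eq_sym // scale1r addrC subrK.
- move=> k; rewrite !mxE; have [->|kj] := eqVneq k j.
    by rewrite eqxx mulr1 subrr mulr0 eqxx.
  by rewrite mulr0 subr0 mulf_eq0 negb_or => /andP[].
Qed.

Lemma simplex_convex : convex_set (@simplex R n).
Proof.
move=> x y l [x0 x1] [y0 y1] /andP[l0 l1]; split=> [i|].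
  by rewrite !mxE addr_ge0 ?mulr_ge0 ?subr_ge0.
by under eq_bigr do rewrite !mxE; rewrite big_split -!mulr_sumr /= x1 y1; ring.
Qed.

End Simplex.

Definition simplex_on (R : realType) n (P : 'I_n -> Prop) : set 'cV[R]_n :=
  [set z | simplex n z /\ forall j, ~ P j -> z j 0 = 0].

Section SimplexCompact.
Variables (R : realType) (n : nat).

Lemma simplex_closed : closed (@simplex R n).
Proof.
have -> : simplex n = \bigcap_(i in setT) [set z : 'cV[R]_n | 0 <= z i 0]
    `&` [set z | \sum_i z i 0 = 1].
  apply/seteqP; split=> [z [z0 z1]|z [z0 z1]]; split=> // i; first by move=> _; exact: z0.
  exact: z0.
apply: closedI.
  apply: closed_bigI => i _.
  by have := (continuous_closedP _).1 (@coord_continuous R n 1 i 0) _ (@closed_ge R 0).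
have sum_cont : continuous (fun z : 'cV[R]_n => \sum_i z i 0).
  by apply: continuous_sumr => i; exact: coord_continuous.
by have := (continuous_closedP _).1 sum_cont _ (@closed_eq R 1).
Qed.

Lemma simplex_compact : compact (@simplex R n).
Proof.
apply: (subclosed_compact simplex_closed (@cV_box_compact R n)).
by move=> z zs i; rewrite (simplex_le1 _ zs) andbT; case: zs.
Qed.

Lemma simplex_on_compact (P : 'I_n -> Prop) : compact (@simplex_on R n P).
Proof.
have -> : simplex_on P = simplex n `&` \bigcap_(j in [set j | ~ P j])
    [set z : 'cV[R]_n | z j 0 = 0].
  by apply/seteqP; split=> [z [zs zP]|z [zs zP]]; split=> // j; exact: zP.
apply: compact_closedI; first exact: simplex_compact.
apply: closed_bigI => j _.
by have := (continuous_closedP _).1 (@coord_continuous R n 1 j 0) _ (@closed_eq R 0).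
Qed.

Lemma exists_l1_nearest p (A : 'M[R]_(p, n)) u (x : 'cV[R]_n) :
  (exists2 z, simplex n z & A *m z = u) ->
  exists z, [/\ simplex n z, A *m z = u & forall z', simplex n z' -> A *m z' = u ->
    l1norm (x - z) <= l1norm (x - z')].
Proof.
move=> [z0 z0s Az0].
have Kc : compact (simplex n `&` mulmx A @^-1` [set u]).
  apply: compact_closedI; first exact: simplex_compact.
  apply: (continuous_closedP _).1; first exact: mulmx_continuous.
  by have := @accessible_closed_set1 _ (hausdorff_accessible (@norm_hausdorff _ 'cV[R]_p)) u.
have l1c : continuous (fun z : 'cV[R]_n => l1norm (x - z)).
  by apply: continuous_sumr => i; exact: coord_dist_continuous.
have [z] := compact_EVT_min (ex_intro _ z0 (conj z0s Az0)) Kc (continuous_subspaceT l1c).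
rewrite inE => -[zs Az] zmin; exists z; split=> // z' z's Az'.
by apply: zmin; rewrite inE.
Qed.

End SimplexCompact.

Section ConvexHull.
Variables (R : realType) (p n : nat) (A : 'M[R]_(p, n)).
Implicit Types (C G : set 'cV[R]_p) (z : 'cV[R]_n).

Let supp z := [pred j | z j 0 != 0].

Lemma convex_set_mulmx C z : convex_set C -> simplex n z ->
  (forall j, z j 0 != 0 -> C (col j A)) -> C (A *m z).
Proof.
move=> Cconv; move: {-1}#|supp z| (leqnn #|supp z|) => k.
elim: k z => [|k IHk] z supp_le zs zC; have [j zj] := simplex_neq0 zs.
  by move: supp_le; rewrite leqn0 => /eqP/card0_eq/(_ j); rewrite !inE zj.
have [->|[z' [z's /andP[zj0 zj1] ez z'z]]] := simplex_split zs zj.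
  by rewrite -colE; exact: zC.
have supp_lt : (#|supp z'| < #|supp z|)%N.
  apply: proper_card; apply/properP; split.
    by apply/fintype.subsetP => i; rewrite !inE => /z'z[].
  by exists j; rewrite !inE ?zj //; apply/negP => /z'z[_]; rewrite eqxx.
rewrite ez mulmxDr -!scalemxAr -colE; apply: Cconv.
- exact: zC.
- apply: IHk z's _ => [|i /z'z[/zC]//]; exact: leq_trans supp_lt supp_le.
- by rewrite !ltW.
Qed.

Lemma face_mulmx_col C G z j : convex_set C -> is_face C G -> simplex n z ->
  (forall i, z i 0 != 0 -> C (col i A)) -> G (A *m z) -> z j 0 != 0 -> G (col j A).
Proof.
move=> Cconv [_ _ Gface] zs zC Gz zj.
have [ez|[z' [z's zj01 ez z'z]]] := simplex_split zs zj.
  by rewrite colE -ez.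
have Cz' : C (A *m z') by apply: convex_set_mulmx => // i /z'z[/zC].
move: Gz; rewrite ez mulmxDr -!scalemxAr -colE => Gz.
by have [] := Gface _ _ _ (zC j zj) Cz' zj01 Gz.
Qed.

End ConvexHull.

Section MinimalFace.
Variables (R : realType) (p : nat).
Implicit Types (C : set 'cV[R]_p) (q x y w : 'cV[R]_p).

Lemma convex_set3 C a b c x y w : convex_set C ->
  0 <= a -> 0 <= b -> 0 <= c -> a + b + c = 1 -> C x -> C y -> C w ->
  C (a *: x + b *: y + c *: w).
Proof.
move=> Cconv a0 b0 c0 abc1 Cx Cy Cw.
have [c1|c_neq1] := eqVneq c 1.
  have [-> ->] : a = 0 /\ b = 0 by lra.
  by rewrite c1 !scale0r !add0r scale1r.
have c_lt1 : 0 < 1 - c by rewrite subr_gt0 lt_neqAle c_neq1; lra.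
have -> : a *: x + b *: y + c *: w =
    (1 - c) *: ((a / (1 - c)) *: x + (1 - a / (1 - c)) *: y) + (1 - (1 - c)) *: w.
  have -> : b = 1 - a - c by lra.
  by apply/matrixP => i j; rewrite !mxE; field; rewrite gt_eqF.
apply: (Cconv) => //; last lra.
apply: Cconv => //; apply/andP; split; first by rewrite divr_ge0 // ltW.
by rewrite ler_pdivrMr // mul1r; lra.
Qed.

(* The segment from [y] through [q] extends beyond [q] inside [C]; for a convex [C]
   this is the smallest face of [C] containing [q]. *)
Definition minimal_face C q :=
  [set y | C y /\ exists2 e : R, 0 < e & C (q + e *: (q - y))].

Lemma minimal_face_center C q : C q -> minimal_face C q q.
Proof. by move=> Cq; split=> //; exists 1 => //; rewrite subrr scaler0 addr0. Qed.

Section Face.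
Variables (C : set 'cV[R]_p) (q : 'cV[R]_p).
Hypotheses (Cconv : convex_set C) (Cq : C q).

Lemma minimal_face_convex : convex_set (minimal_face C q).
Proof.
move=> x y l [Cx [e1 e1_gt0 Cx1]] [Cy [e2 e2_gt0 Cy2]] l01.
split; first exact: Cconv.
pose e := Num.min e1 e2.
have e_gt0 : 0 < e by rewrite lt_min e1_gt0 e2_gt0.
have e_le1 : e <= e1 by rewrite ge_min lexx.
have e_le2 : e <= e2 by rewrite ge_min lexx orbT.
exists e => //.
have r1 : e / e1 <= 1 by rewrite ler_pdivrMr // mul1r.
have r2 : e / e2 <= 1 by rewrite ler_pdivrMr // mul1r.
have r1' : 0 <= e / e1 by rewrite divr_ge0 // ltW.
have r2' : 0 <= e / e2 by rewrite divr_ge0 // ltW.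
move: l01 => /andP[l0 l1].
have -> : q + e *: (q - (l *: x + (1 - l) *: y)) =
    (l * (1 - e / e1) + (1 - l) * (1 - e / e2)) *: q
    + (l * (e / e1)) *: (q + e1 *: (q - x)) + ((1 - l) * (e / e2)) *: (q + e2 *: (q - y)).
  by apply/matrixP => i k; rewrite !mxE; field; rewrite ?gt_eqF.
by apply: convex_set3 => //; [nra | nra | nra | field; rewrite !gt_eqF].
Qed.

Lemma minimal_face_extreme x y l : C x -> C y -> 0 < l < 1 ->
  minimal_face C q (l *: x + (1 - l) *: y) -> minimal_face C q x.
Proof.
move=> Cx Cy /andP[l0 l1] [_ [e e_gt0 Cqe]]; split=> //.
have e1 : 0 < 1 + e by rewrite addr_gt0.
exists (l * e / (1 + e)); first by rewrite divr_gt0 ?mulr_gt0.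
have -> : q + (l * e / (1 + e)) *: (q - x) =
    (e * l / (1 + e)) *: q + (1 / (1 + e)) *: (q + e *: (q - (l *: x + (1 - l) *: y)))
    + (e * (1 - l) / (1 + e)) *: y.
  by apply/matrixP => i k; rewrite !mxE; field; rewrite gt_eqF.
apply: convex_set3 => //; rewrite ?divr_ge0 ?mulr_ge0 //; try lra.
by field; rewrite gt_eqF.
Qed.

Lemma minimal_face_face : is_face C (minimal_face C q).
Proof.
split; [by move=> y [] | exact: minimal_face_convex |].
move=> x y l Cx Cy l01 Fxy; split; first exact: minimal_face_extreme Fxy.
have l01' : 0 < 1 - l < 1 by case/andP: l01 => l0 l1; apply/andP; split; lra.
apply: minimal_face_extreme Cy Cx l01' _.
by rewrite (_ : 1 - (1 - l) = l) 1?addrC //; ring.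
Qed.

End Face.
End MinimalFace.

Section Argmin.
Variables (R : realType) (m n : nat) (A : 'M[R]_(m + 1, n)) (v : 'cV[R]_m).

Lemma lin_argmin_face (C : set 'cV[R]_(m + 1)) : convex_set C ->
  is_face C [set w | C w /\ forall w', C w' -> lin v w <= lin v w'].
Proof.
move=> Cconv; split; first by move=> w [].
  move=> x y l [Cx xmin] [Cy ymin] l01; split; first exact: Cconv.
  move=> w' Cw'; rewrite linD !linZ; move: l01 => /andP[l0 l1].
  by have := xmin _ Cw'; have := ymin _ Cw'; nra.
move=> x y l Cx Cy /andP[l0 l1] [Cxy xymin].
have := xymin _ Cx; have := xymin _ Cy; rewrite linD !linZ => ley lex.
by split; split=> // w' Cw'; have := xymin _ Cw'; rewrite linD !linZ; nra.
Qed.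

Lemma convA_convex : convex_set (convA A).
Proof.
move=> _ _ l [x xs <-] [y ys <-] l01; exists (l *: x + (1 - l) *: y).
  exact: simplex_convex.
by rewrite mulmxDr -!scalemxAr.
Qed.

Lemma Fv_face : is_face (convA A) (Fv A v).
Proof. exact: lin_argmin_face convA_convex. Qed.

Lemma col_convA j : convA A (col j A).
Proof. by exists (delta_mx j 0); [exact: simplex_delta | rewrite colE]. Qed.

Lemma Fv_convex : convex_set (Fv A v).
Proof. by case: Fv_face. Qed.

Lemma Fv_col z j : simplex n z -> Fv A v (A *m z) -> z j 0 != 0 -> Fv A v (col j A).
Proof. by move=> zs; apply: face_mulmx_col convA_convex Fv_face zs _ => i _; exact: col_convA. Qed.

Section FvFace.
Variable G : set 'cV[R]_(m + 1).
Hypothesis Gface : is_face (Fv A v) G.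

Lemma face_conv_cols w : G w -> conv_cols A (fun j => G (col j A)) w.
Proof.
move=> Gw; have [GF _ _] := Gface; have [[b bs bw] _] := GF _ Gw.
have bF i : b i 0 != 0 -> Fv A v (col i A) by apply: Fv_col bs _; rewrite bw; exact: GF.
exists b => //; split=> // j; apply: contra_notP => /eqP.
by apply: face_mulmx_col Fv_convex Gface bs bF _; rewrite bw.
Qed.

Lemma face_cols_separated b g : simplex_on (fun j => G (col j A)) b ->
  simplex_on (fun j => ~ G (col j A)) g -> A *m b <> A *m g.
Proof.
move=> [bs bG] [gs gG] ebg; have [GF Gconv _] := Gface.
have Gg : G (A *m g).
  rewrite -ebg; apply: convex_set_mulmx Gconv bs _ => j bj.
  by have [//|/bG bj0] := pselect (G (col j A)); move: bj; rewrite bj0 eqxx.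
have [j gj] := simplex_neq0 gs.
have gF i : g i 0 != 0 -> Fv A v (col i A) by apply: Fv_col gs _; exact: GF.
have Gj := face_mulmx_col Fv_convex Gface gs gF Gg gj.
by move: gj; rewrite gG ?eqxx.
Qed.

End FvFace.

End Argmin.

Section FacialDistance.
Variables (R : realType) (m n : nat) (N : 'cV[R]_m -> R).
Variables (A : 'M[R]_(m + 1, n)) (v : 'cV[R]_m).
Hypothesis Nnorm : is_norm N.

Lemma mulmx_separation (P Q : 'I_n -> Prop) :
  (forall b g, simplex_on P b -> simplex_on Q g -> A *m b <> A *m g) ->
  exists2 d, 0 < d & forall b g, simplex_on P b -> simplex_on Q g ->
    d <= normv N v (A *m b - A *m g).
Proof.
move=> PQsep.
pose f (bg : 'cV[R]_n * 'cV[R]_n) := normv N v (A *m (bg.1 - bg.2)).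
have Kc := compact_setX (@simplex_on_compact R n P) (@simplex_on_compact R n Q).
have fc : continuous f.
  move=> bg; apply: (@continuous_comp _ _ _ (fun bg : 'cV[R]_n * 'cV[R]_n => bg.1 - bg.2)
    (fun w => normv N v (A *m w))); first exact: sub_continuous.
  apply: (@continuous_comp _ _ _ (mulmx A) (normv N v)); first exact: mulmx_continuous.
  exact: normv_continuous.
have fpos bg : (simplex_on P `*` simplex_on Q) bg -> 0 < f bg.
  case: bg => b g [/= Pb Qg]; rewrite lt_neqAle normv_ge0 andbT eq_sym.
  by apply/eqP => /(normv_eq0 Nnorm)/eqP; rewrite mulmxBr subr_eq0 => /eqP/PQsep; apply.
have [d d_gt0 dle] := compact_pos_lower_bound Kc (continuous_subspaceT fc) fpos.
by exists d => // b g Pb Qg; rewrite -mulmxBr; exact: (dle (b, g)).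
Qed.

Lemma distv_le F G w w' : F w -> G w' -> distv N v F G <= normv N v (w - w').
Proof.
move=> Fw Gw'; apply: ge_inf; last by exists w, w'.
by exists 0 => _ [x [x' [_ _ ->]]]; exact: normv_ge0.
Qed.

Lemma distv_ge0 F G : 0 <= distv N v F G.
Proof. by apply: inf_ge0 => _ [x [x' [_ _ ->]]]; exact: normv_ge0. Qed.

Lemma Phi_ge0 : 0 <= Phi N A v.
Proof. by apply: inf_ge0 => _ [G _ <-]; exact: distv_ge0. Qed.

Lemma Phi_le_normv G w w' : is_face (Fv A v) G -> G <> set0 -> G <> convA A ->
  G w -> conv_cols A (fun j => ~ G (col j A)) w' -> Phi N A v <= normv N v (w - w').
Proof.
move=> Gface G0 GA Gw w'G; apply: le_trans (distv_le Gw w'G).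
apply: ge_inf; last by exists G.
by exists 0 => _ [G' _ <-]; exact: distv_ge0.
Qed.

Lemma face_col_out G : is_face (Fv A v) G -> G <> convA A -> exists j, ~ G (col j A).
Proof.
move=> [GF Gconv _] GA; apply: contra_notP GA => /forallNP Gcols.
apply/seteqP; split=> [w /GF [] //|_ [z zs <-]].
by apply: convex_set_mulmx Gconv zs _ => j _; apply: contrapT; exact: Gcols.
Qed.

Lemma distv_face_ge G d : is_face (Fv A v) G -> G <> set0 -> G <> convA A ->
  (forall b g, simplex_on (fun j => G (col j A)) b ->
     simplex_on (fun j => ~ G (col j A)) g -> d <= normv N v (A *m b - A *m g)) ->
  d <= distv N v G (conv_cols A (fun j => ~ G (col j A))).
Proof.
move=> Gface G0 GA dle; apply: lb_le_inf.
  have [w Gw] : G !=set0 by apply/set0P/eqP.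
  have [j Gj] := face_col_out Gface GA.
  exists (normv N v (w - col j A)), w, (col j A); split=> //.
  exists (delta_mx j 0); last by rewrite colE.
  split=> [|i]; first exact: simplex_delta.
  by rewrite mxE; have [->|] := eqVneq i j.
move=> _ [w [_ [Gw [g gs <-] ->]]].
by have [b bs <-] := face_conv_cols Gface Gw; exact: dle.
Qed.

Lemma Phi_gt0 G : is_face (Fv A v) G -> G <> set0 -> G <> convA A -> 0 < Phi N A v.
Proof.
move=> Gface G0 GA.
(* A face enters [Phi] only through its set of columns, so finitely many bounds suffice. *)
pose sep (S : {set 'I_n}) := forall b g, simplex_on (fun j => j \in S) b ->
  simplex_on (fun j => j \notin S) g -> A *m b <> A *m g.
have /choice [d dP] : forall S : {set 'I_n}, exists d, 0 < d /\ (sep S ->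
    forall b g, simplex_on (fun j => j \in S) b -> simplex_on (fun j => j \notin S) g ->
    d <= normv N v (A *m b - A *m g)).
  move=> S; have [/mulmx_separation[d d_gt0 dle]|nsep] := pselect (sep S).
    by exists d.
  by exists 1; split=> // /nsep.
pose d0 := \big[Num.min/1]_S d S.
have d0_gt0 : 0 < d0 by apply: lt_bigmin => // S _; case: (dP S).
apply: lt_le_trans d0_gt0 _; apply: lb_le_inf.
  by exists (distv N v G (conv_cols A (fun j => ~ G (col j A)))), G.
move=> _ [G' [G'face [G'0 G'A]] <-].
pose S := [set j | `[< G' (col j A) >]]%SET.
have inS : (fun j => is_true (j \in S)) = (fun j => G' (col j A)).
  by apply/funext => j; rewrite inE asboolE.
have notinS : (fun j => is_true (j \notin S)) = (fun j => ~ G' (col j A)).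
  by apply/funext => j; apply/propext; rewrite inE; split=> /asboolPn.
apply: distv_face_ge => // b g bS gS; apply: (@le_trans _ _ (d S)); first exact: bigmin_le.
have [_] := dP S; apply; rewrite ?inS ?notinS //.
rewrite /sep inS notinS => b' g'.
exact: (face_cols_separated G'face).
Qed.

End FacialDistance.

Section NearestPoint.
Variables (R : realType) (m n : nat) (N : 'cV[R]_m -> R).
Variables (A : 'M[R]_(m + 1, n)) (v : 'cV[R]_m) (u : 'cV[R]_(m + 1)) (x z : 'cV[R]_n).
Hypotheses (Nnorm : is_norm N) (Fu : Fv A v u) (xs : simplex n x) (zs : simplex n z).
Hypotheses (Az : A *m z = u) (zmin : forall z', simplex n z' -> A *m z' = u ->
  l1norm (x - z) <= l1norm (x - z')).

Let max0_cases (a : R) :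
  Num.max a 0 = a /\ Num.max (- a) 0 = 0 /\ 0 <= a \/
  Num.max a 0 = 0 /\ Num.max (- a) 0 = - a /\ a < 0.
Proof.
have [a0|a0] := lerP 0 a; [left|right].
  by rewrite max_r // oppr_le0.
by rewrite max_l // oppr_ge0 ltW.
Qed.

Let max0_sub (a : R) : Num.max a 0 - Num.max (- a) 0 = a.
Proof. by have [[-> [-> _]]|[-> [-> _]]] := max0_cases a; rewrite ?subr0 ?sub0r ?opprK. Qed.

Let max0_add (a : R) : Num.max a 0 + Num.max (- a) 0 = `|a|.
Proof.
have [[-> [-> a0]]|[-> [-> a0]]] := max0_cases a; first by rewrite addr0 ger0_norm.
by rewrite add0r ltr0_norm.
Qed.

Definition excess : 'cV[R]_n := \col_j Num.max (x j 0 - z j 0) 0.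
Definition deficit : 'cV[R]_n := \col_j Num.max (z j 0 - x j 0) 0.
Definition transport := \sum_j excess j 0.

Lemma excess_ge0 j : 0 <= excess j 0. Proof. by rewrite mxE le_max lexx orbT. Qed.
Lemma deficit_ge0 j : 0 <= deficit j 0. Proof. by rewrite mxE le_max lexx orbT. Qed.

Lemma excess_le j : excess j 0 <= x j 0.
Proof. by case: xs zs => x0 _ [z0 _]; rewrite mxE ge_max x0 andbT gerBl z0. Qed.

Lemma deficit_le j : deficit j 0 <= z j 0.
Proof. by case: xs zs => x0 _ [z0 _]; rewrite mxE ge_max z0 andbT gerBl x0. Qed.

Lemma excess_sub_deficit j : excess j 0 - deficit j 0 = x j 0 - z j 0.
Proof. by rewrite !mxE -[z j 0 - _]opprB max0_sub. Qed.

Lemma subr_excess_deficit : x - z = excess - deficit.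
Proof. by apply/matrixP => i k; rewrite ord1 !mxE -[z i 0 - _]opprB max0_sub. Qed.

Lemma sum_deficit : \sum_j deficit j 0 = transport.
Proof.
have [[_ x1] [_ z1]] := (xs, zs).
have : \sum_j (excess j 0 - deficit j 0) = 0.
  by under eq_bigr do rewrite excess_sub_deficit; rewrite sumrB x1 z1 subrr.
by rewrite sumrB => /eqP; rewrite subr_eq0 => /eqP.
Qed.

Lemma l1norm_transport : l1norm (x - z) = transport *+ 2.
Proof.
rewrite /l1norm mulr2n -{2}sum_deficit /transport -big_split /=.
by apply: eq_bigr => j _; rewrite !mxE -[z j 0 - _]opprB max0_add.
Qed.

Lemma transport_ge0 : 0 <= transport.
Proof. by apply: sumr_ge0 => j _; exact: excess_ge0. Qed.

Lemma transport_le1 : transport <= 1.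
Proof. by case: xs => _ <-; apply: ler_sum => j _; exact: excess_le. Qed.

Section PositiveTransport.
Hypothesis t_gt0 : 0 < transport.

Let q := A *m (transport^-1 *: deficit).

Lemma simplex_scaled_deficit : simplex n (transport^-1 *: deficit).
Proof.
rewrite -sum_deficit; apply: simplex_normalize; first exact: deficit_ge0.
by rewrite sum_deficit.
Qed.

Lemma simplex_scaled_excess : simplex n (transport^-1 *: excess).
Proof. exact: simplex_normalize excess_ge0 t_gt0. Qed.

Lemma Fv_scaled_deficit : Fv A v q.
Proof.
apply: convex_set_mulmx (Fv_convex (A := A) (v := v)) simplex_scaled_deficit _ => j.
rewrite mxE mulf_eq0 negb_or => /andP[_ dj].
apply: Fv_col zs _ _; first by rewrite Az.
by apply: contraNneq dj => zj0; rewrite eq_le deficit_ge0 andbT -zj0 deficit_le.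
Qed.

Section Shift.
Variables (j : 'I_n) (e : R) (rho : 'cV[R]_n).
Hypotheses (e_gt0 : 0 < e) (ej_gt0 : 0 < excess j 0) (rhos : simplex n rho).
Hypothesis Arho : A *m rho = q + e *: (q - col j A).

Let lam := e / (1 + e).
Let th := Num.min 1 (excess j 0 / (transport * lam)).

Let e1_gt0 : 0 < 1 + e. Proof. by rewrite addr_gt0. Qed.
Let lam_gt0 : 0 < lam. Proof. by rewrite divr_gt0. Qed.
Let lam_lt1 : lam < 1. Proof. by rewrite ltr_pdivrMr // mul1r ltrDr ltr01. Qed.
Let tlam_gt0 : 0 < transport * lam. Proof. by rewrite mulr_gt0. Qed.
Let th_gt0 : 0 < th. Proof. by rewrite lt_min ltr01 divr_gt0. Qed.
Let th_le1 : th <= 1. Proof. by rewrite ge_min lexx. Qed.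
Let th_le : th * (transport * lam) <= excess j 0.
Proof. by rewrite -ler_pdivlMr // ge_min lexx orbT. Qed.
Let coef1 : 0 <= th * transport * (1 - lam).
Proof. by apply/ltW; rewrite !mulr_gt0 // subr_gt0. Qed.
Let coef2 : 0 <= th * transport * lam.
Proof. by apply: ltW; rewrite -mulrA mulr_gt0. Qed.
Let sum_delta : \sum_(k < n) (k == j)%:R = 1 :> R.
Proof. by rewrite (bigD1 j) //= eqxx big1 ?addr0 // => k /negbTE ->. Qed.

(* Since [(1 - lam) *: (q + e *: (q - col j A)) + lam *: col j A = q], moving the
   mass [th * transport] of the deficit onto [rho] and column [j] keeps [A *m _ = u],
   while it cancels [th * transport * lam] of the excess at [j]. *)
Definition shifted := z - th *: deficit + (th * transport * (1 - lam)) *: rho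
  + (th * transport * lam) *: delta_mx j 0.

Let shiftedE k : shifted k 0 = z k 0 - th * deficit k 0
  + th * transport * (1 - lam) * rho k 0 + th * transport * lam * (k == j)%:R.
Proof. by rewrite !mxE eqxx andbT. Qed.

Lemma simplex_shifted : simplex n shifted.
Proof.
have [[z0 z1] [rho0 rho1]] := (zs, rhos); split=> [k|].
  rewrite shiftedE; have zk : 0 <= z k 0 - th * deficit k 0.
    by have := deficit_le k; have := deficit_ge0 k; have := th_le1; have := th_gt0; nra.
  by have := mulr_ge0 coef1 (rho0 k); have := mulr_ge0 coef2 (ler0n R (k == j)); lra.
under eq_bigr do rewrite shiftedE.
by rewrite !big_split sumrN /= z1 -!mulr_sumr sum_deficit rho1 sum_delta; ring.
Qed.

Lemma mulmx_shifted : A *m shifted = u.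
Proof.
have Adef : A *m deficit = transport *: q.
  by rewrite /q -scalemxAr scalerA divff ?gt_eqF // scale1r.
rewrite /shifted !mulmxDr mulmxN -!scalemxAr Az Adef Arho -colE.
by apply/matrixP => i k; rewrite !mxE /lam; field; rewrite gt_eqF.
Qed.

Lemma l1norm_shifted : l1norm (x - shifted) < l1norm (x - z).
Proof.
have [_ rho1] := rhos.
pose P k := excess k 0 - th * transport * lam * (k == j)%:R.
have P_ge0 k : 0 <= P k.
  rewrite /P; have [->|_] := eqVneq k j; last by rewrite mulr0 subr0 excess_ge0.
  by rewrite mulr1 subr_ge0 -mulrA.
have shifted_le k : `|(x - shifted) k 0| <=
    P k + (1 - th) * deficit k 0 + th * transport * (1 - lam) * rho k 0.
  have -> : (x - shifted) k 0 = x k 0 - shifted k 0 by rewrite !mxE.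
  rewrite shiftedE ler_norml; have := excess_sub_deficit k; have := P_ge0 k.
  have : 0 <= (1 - th) * deficit k 0 by rewrite mulr_ge0 ?subr_ge0 ?deficit_ge0.
  have := mulr_ge0 coef1 (proj1 rhos k).
  by rewrite /P; lra.
apply: le_lt_trans (ler_sum _ (fun k _ => shifted_le k)) _.
rewrite l1norm_transport !big_split /= sumrN -!mulr_sumr sum_deficit rho1 sum_delta.
by have := mulr_gt0 th_gt0 tlam_gt0; rewrite mulrA mulr2n -/transport; lra.
Qed.

End Shift.

Lemma excess_out_face j : minimal_face (Fv A v) q (col j A) -> excess j 0 = 0.
Proof.
move=> [_ [e e_gt0 [[rho rhos Arho] _]]].
apply/eqP; rewrite eq_le excess_ge0 andbT leNgt; apply/negP => ej_gt0.
have := zmin (simplex_shifted e_gt0 ej_gt0 rhos) (mulmx_shifted e_gt0 Arho).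
by rewrite leNgt l1norm_shifted.
Qed.

Lemma transport_Phi_le : 0 < Phi N A v /\ transport * Phi N A v <= normv N v (A *m x - u).
Proof.
pose G := minimal_face (Fv A v) q.
have Gface : is_face (Fv A v) G.
  exact: minimal_face_face (Fv_convex (A := A) (v := v)) Fv_scaled_deficit.
have Gq : G q := minimal_face_center Fv_scaled_deficit.
have [j ej] : exists j, excess j 0 != 0.
  apply/existsP; apply: contraTT t_gt0 => /existsPn e0.
  by rewrite /transport big1 ?ltxx // => j _; exact/eqP/negbNE/e0.
have GA : G <> convA A.
  move=> GA; have : G (col j A) by rewrite GA; exact: col_convA.
  by move/excess_out_face => ej0; rewrite ej0 eqxx in ej.
have G0 : G <> set0 by move=> G0; rewrite G0 in Gq.
have Phi_pos := Phi_gt0 Nnorm Gface G0 GA.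
split=> //.
pose p := A *m (transport^-1 *: excess).
have Gp : conv_cols A (fun j => ~ G (col j A)) p.
  exists (transport^-1 *: excess) => //; split; first exact: simplex_scaled_excess.
  by move=> k /contrapT Gk; rewrite mxE excess_out_face // mulr0.
have Axu : A *m x - u = transport *: (p - q).
  rewrite -Az -mulmxBr subr_excess_deficit /p /q -!scalemxAr -scalerBr -mulmxBr.
  by rewrite scalerA divff ?gt_eqF // scale1r.
have t01 : 0 <= transport <= 1 by rewrite ltW ?transport_le1.
rewrite Axu; apply: le_trans (normv_scale_ge v Nnorm _ t01).
by rewrite ler_pM2l // -opprB normvN //; exact: Phi_le_normv Gface _ GA Gq Gp.
Qed.

End PositiveTransport.

End NearestPoint.

Theorem lemma2 (R : realType) (m n : nat) (N : 'cV[R]_m -> R)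
  (A : 'M[R]_(m + 1, n)) (v : 'cV[R]_m) :
  is_norm N ->
  (exists i j : 'I_n, col i A != col j A) ->
  forall u x, Fv A v u -> simplex n x ->
  exists z, [/\ simplex n z, A *m z = u &
    l1norm (x - z) <= 2 * normv N v (A *m x - u) / Phi N A v].
Proof.
move=> Nnorm _ u x Fu xs.
have [z [zs Az zmin]] := exists_l1_nearest x (proj1 Fu).
exists z; split=> //; rewrite (l1norm_transport xs zs).
have [t_gt0|t_le0] := ltrP 0 (transport x z).
  have [Phi_gt0 tPhi] := transport_Phi_le Nnorm Fu xs zs Az zmin t_gt0.
  by rewrite ler_pdivlMr // mulr2n mulrDl; lra.
have -> : transport x z = 0 by apply/eqP; rewrite eq_le t_le0 transport_ge0.
by rewrite mul0rn divr_ge0 ?mulr_ge0 ?normv_ge0 ?Phi_ge0.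
Qed.
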